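(* Let $\big(Z,\psi^{(z)},(I^{(z)}_A,\phi^{(z)}_A)_{A\in P_{\mathbb A}}\big)$ and $\big(C,\psi^{(c)},(I^{(c)}_A,\phi^{(c)}_A)_{A\in P_{\mathbb A}}\big)$ be two minimal action-induced representations (minAIRs) of the same family of action-induced datasets $\{D_A\}_{A\in P_{\mathbb A}}$, where $Z\subseteq\mathbb R^{d_Z}$ and $C\subseteq\mathbb R^{d_C}$ are convex. Let $\mathcal A=\{A_1,\dots,A_m\}\subseteq P_{\mathbb A}$ be a nonempty set of allowed action combinations, and put $I^{(z)}_{\mathcal A}=\bigcap_{A\in\mathcal A}I^{(z)}_A$ and $I^{(c)}_{\mathcal A}=\bigcap_{A\in\mathcal A}I^{(c)}_A$. For $z\in Z$ write $z_{\mathcal A}=(z_i)_{i\in I^{(z)}_{\mathcal A}}$, $Z_{\mathcal A}=\{z_{\mathcal A}: z\in Z\}$, and similarly $\pi^{(c)}_{\mathcal A}$ denotes the coordinate projection onto the coordinates in $I^{(c)}_{\mathcal A}$ (applied to elements of $C_{A_j}$, whose coordinates are indexed by $I^{(c)}_{A_j}\supseteq I^{(c)}_{\mathcal A}$), with $C_{\mathcal A}=\{(c_i)_{i\in I^{(c)}_{\mathcal A}}: c\in C\}$. Then for any $A_j\in\mathcal A$, the map $g_{\mathcal A}:Z_{A_j}\to C_{\mathcal A}$, $$g_{\mathcal A}:=\pi^{(c)}_{\mathcal A}\circ(\phi^{(c)}_{A_j})^{-1}\circ\phi^{(z)}_{A_j},$$ depends only on the overlap coordinates $z_{\mathcal A}$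 of its argument $z_{A_j}$, and neither on $j$ nor on the completion of $z_{\mathcal A}$ to $z_{A_j}\in Z_{A_j}$. Moreover, regarded as a function of $z_{\mathcal A}\in Z_{\mathcal A}$ only, $g_{\mathcal A}:Z_{\mathcal A}\to C_{\mathcal A}$ is bijective.
   Context: Setting. $X\subseteq\mathbb R^{d_x}$ is a continuous manifold (the set of input data points), $\mathbb A=\{1,\dots,n_{\mathbb A}\}$ is a finite set of elementary actions, and $P_{\mathbb A}\subseteq\mathcal P(\mathbb A)$ is a set of allowed action combinations. For each $A\in P_{\mathbb A}$ there is a deterministic map $y_A:X\to Y_A\subseteq\mathbb R^{d_{Y_A}}$ whose image $Y_A$ is a continuous manifold; $D_A=\{(x,y_A(x)):x\in X\}$ is the action-induced dataset for $A$. Action-induced representation (AIR). Let $Z\subseteq\mathbb R^{d_Z}$ be a continuous manifold (latent space). For each $A\in P_{\mathbb A}$ let $I_A\subseteq\{1,\dots,d_Z\}$ be an index set, $\pi_A:Z\to Z_A\subseteq\mathbb R^{|I_A|}$, $\pi_A(z)=z_A:=(z_i)_{i\in I_A}$, with $Z_A=\{(z_i)_{i\in I_A}:z\in Z\}$. If there are continuous maps $\psi:X\to Z$ and $\phi_A:Z_A\to Y_A$ ($A\in P_{\mathbb A}$) with $(\phi_A\circ\pi_A\circ\psi)(x)=y_A(x)$ for all $x\in X$, then $\big(Z,\psi,(I_A,\phi_A)_{A\in P_{\mathbb A}}\big)$ is an AIR of $\{D_A\}_{A\in P_{\mathbb A}}$. Minimal AIR (minAIR). An AIR is minimal if: (1)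 $\psi:X\to Z$ is surjective, $d_Z=\big|\bigcup_{A\in P_{\mathbb A}}I_A\big|$, and every $\phi_A:Z_A\to Y_A$ is invertible with continuous inverse; (2) $Z$ is open in $\mathbb R^{d_Z}$ and carries the subspace topology of $\mathbb R^{d_Z}$. *)

From HB Require Import structures.
From mathcomp Require Import all_boot all_order all_algebra.
From mathcomp Require Import all_classical all_reals topology normedtype.
Unset Printing Implicit Defensive.
Import Order.TTheory GRing.Theory Num.Theory.
Import numFieldNormedType.Exports.
Local Open Scope classical_set_scope.
Local Open Scope ring_scope.

(* Coordinate projection z |-> z_I = (z_i)_{i in I}, I subset {0..n-1};
   the coordinates of z_I are listed in increasing order of i. *)
Definition proj {R : realType} {n : nat} (I : {set 'I_n}) (z : 'rV[R]_n)
  : 'rV[R]_#|I| :=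
  \row_(k < #|I|) z 0 (enum_val k).

(* Coordinate projection from a vector indexed by J onto the coordinates in
   I (meant for I \subset J): the k-th coordinate of the result is the
   coordinate of w indexed by the same element enum_val k of 'I_n. *)
Definition subproj {R : realType} {n : nat} (J I : {set 'I_n})
  (w : 'rV[R]_#|J|) : 'rV[R]_#|I| :=
  \row_(k < #|I|) \sum_(l < #|J|)
      (if enum_val l == enum_val k then w 0 l else 0).

Definition projset {R : realType} {n : nat} (I : {set 'I_n})
  (Z : set 'rV[R]_n) : set 'rV[R]_#|I| := proj I @` Z.

Definition convex_subset {R : realType} {n : nat} (Z : set 'rV[R]_n) :=
  forall z1 z2 (t : R), Z z1 -> Z z2 -> 0 <= t -> t <= 1 ->
    Z ((1 - t) *: z1 + t *: z2).

(* Action-induced representation (Z, psi, (I_A, phi_A)_{A in PA}) of the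
   datasets D_A = {(x, y A x) : x in X}, A in PA. *)
Definition is_AIR {R : realType} {nA dx dZ : nat}
  (PA : {set {set 'I_nA}}) (X : set 'rV[R]_dx)
  {dY : {set 'I_nA} -> nat} (y : forall A, 'rV[R]_dx -> 'rV[R]_(dY A))
  (Z : set 'rV[R]_dZ) (psi : 'rV[R]_dx -> 'rV[R]_dZ)
  (I : {set 'I_nA} -> {set 'I_dZ})
  (phi : forall A, 'rV[R]_#|I A| -> 'rV[R]_(dY A)) : Prop :=
  [/\ (forall x, X x -> Z (psi x)),
      {within X, continuous psi},
      (forall A, A \in PA ->
         forall w, projset (I A) Z w -> (y A @` X) (phi A w)),
      (forall A, A \in PA -> {within projset (I A) Z, continuous phi A}) &
      (forall A, A \in PA -> forall x, X x -> phi A (proj (I A) (psi x)) = y A x)].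

Definition is_minAIR {R : realType} {nA dx dZ : nat}
  (PA : {set {set 'I_nA}}) (X : set 'rV[R]_dx)
  {dY : {set 'I_nA} -> nat} (y : forall A, 'rV[R]_dx -> 'rV[R]_(dY A))
  (Z : set 'rV[R]_dZ) (psi : 'rV[R]_dx -> 'rV[R]_dZ)
  (I : {set 'I_nA} -> {set 'I_dZ})
  (phi : forall A, 'rV[R]_#|I A| -> 'rV[R]_(dY A)) : Prop :=
  [/\ is_AIR PA X y Z psi I phi,
      Z `<=` psi @` X,
      dZ = #|(\bigcup_(A in PA) I A)%SET|,
      (forall A, A \in PA ->
         exists g : 'rV[R]_(dY A) -> 'rV[R]_#|I A|,
           [/\ set_bij (projset (I A) Z) (y A @` X) (phi A),
               {in projset (I A) Z, cancel (phi A) g},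
               {in y A @` X, cancel g (phi A)} &
               {within y A @` X, continuous g}]) &
      open Z].

(* Two points of the convex open set Z with the same overlap coordinates z_calA
   are joined inside Z by finitely many moves, each changing one coordinate
   j outside I_calA.  Such a j lies outside I_A for some A in calA, so the
   move fixes z_A, hence y_A, hence c_A by injectivity of phic_A, and in
   particular c_calA.  Thus c_calA is a function of z_calA; by symmetry this
   function is injective, and surjectivity of psic makes it onto C_calA. *)

From Pilot Require Import Defs.
From HB Require Import structures.
From mathcomp Require Import all_boot all_order all_algebra.
From mathcomp Require Import all_classical all_reals topology normedtype.
From mathcomp Require Import ring.
Import Order.TTheory GRing.Theory Num.Theory.
Import numFieldNormedType.Exports.
Local Open Scope classical_set_scope.
Local Open Scope ring_scope.

Lemma proj_eqP (R : realType) n (I : {set 'I_n}) (u v : 'rV[R]_n) :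
  Defs.proj I u = Defs.proj I v <-> {in I, forall i, u 0 i = v 0 i}.
Proof.
split=> [/rowP uvI i iI | uvI]; last first.
  by apply/rowP => k; rewrite !mxE; apply: uvI; apply: enum_valP.
by have := uvI (enum_rank_in iI i); rewrite !mxE (enum_rankK_in iI iI).
Qed.

Lemma proj_eq_subset (R : realType) n (I J : {set 'I_n}) (u v : 'rV[R]_n) :
  J \subset I -> Defs.proj I u = Defs.proj I v -> Defs.proj J u = Defs.proj J v.
Proof.
by move=> /fintype.subsetP sJI /proj_eqP uvI; apply/proj_eqP => j /sJI /uvI.
Qed.

Lemma subproj_proj (R : realType) n (J I : {set 'I_n}) (z : 'rV[R]_n) :
  I \subset J -> subproj J I (Defs.proj J z) = Defs.proj I z.
Proof.
move=> sIJ; apply/rowP => k; rewrite !mxE.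
have Jk : enum_val k \in J := fintype.subsetP sIJ _ (enum_valP k).
rewrite (bigD1 (enum_rank_in Jk (enum_val k))) //= (enum_rankK_in Jk Jk) eqxx.
rewrite mxE (enum_rankK_in Jk Jk) big1 ?addr0 // => l /negP nl.
by case: ifP => // /eqP El; case: nl; rewrite -{2}El enum_valK_in.
Qed.

Lemma open_row_box {R : realType} {n} {Z : set 'rV[R]_n} {z} :
  open Z -> Z z -> exists2 e : R, 0 < e &
    forall w : 'rV[R]_n, (forall j, `|z 0 j - w 0 j| < e) -> Z w.
Proof.
move=> /(_ z) oZ /oZ /nbhs_ballP[e e_gt0 ballZ]; exists e => // w zw_lt.
by apply: ballZ; split=> // i j; rewrite (ord1 i) -ball_normE; apply: zw_lt.
Qed.

Lemma convex_open_segment_box {R : realType} {n} {Z : set 'rV[R]_n} {z z'} :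
  open Z -> convex_subset Z -> Z z -> Z z' ->
  exists2 e : R, 0 < e & forall t, 0 <= t <= 1 -> forall w : 'rV[R]_n,
    (forall j, `|((1 - t) *: z + t *: z') 0 j - w 0 j| < e) -> Z w.
Proof.
move=> oZ cZ Zz Zz'.
have [e1 e1_gt0 boxz] := open_row_box oZ Zz.
have [e2 e2_gt0 boxz'] := open_row_box oZ Zz'.
exists (Num.min e1 e2) => [|t /andP[t_ge0 t_le1] w wp_lt].
  by rewrite lt_min e1_gt0.
set p := (1 - t) *: z + t *: z'.
(* translating both endpoints by [w - p] translates the segment onto [w] *)
have -> : w = (1 - t) *: (z + (w - p)) + t *: (z' + (w - p)).
  by apply/rowP => j; rewrite !mxE; ring.
have near_p j : `|p 0 j - w 0 j| < e1 /\ `|p 0 j - w 0 j| < e2.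
  by have := wp_lt j; rewrite lt_min => /andP[].
have shift (u : 'rV[R]_n) j : u 0 j - (u + (w - p)) 0 j = p 0 j - w 0 j.
  by rewrite /p !mxE; ring.
apply: cZ => //; [apply: boxz | apply: boxz'] => j; rewrite shift.
  exact: (near_p j).1.
exact: (near_p j).2.
Qed.

Section CoordinateWalk.

Variables (R : realType) (n : nat) (T : Type).
Variables (I : {set 'I_n}) (Z : set 'rV[R]_n) (f : 'rV[R]_n -> T).

Hypothesis f_step : forall u v j, Z u -> Z v -> j \notin I ->
  (forall k, k != j -> u 0 k = v 0 k) -> f u = f v.

Definition splice (k : nat) (a b : 'rV[R]_n) : 'rV[R]_n :=
  \row_j if (j < k)%N then b 0 j else a 0 j.

Lemma splice_walk_eq a b : (forall k, (k <= n)%N -> Z (splice k a b)) ->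
  {in I, forall j, a 0 j = b 0 j} -> f a = f b.
Proof.
move=> Zsplice abI.
suff f_splice k : (k <= n)%N -> f a = f (splice k a b).
  by rewrite (f_splice n) //; congr f; apply/rowP => j; rewrite mxE ltn_ord.
elim: k => [_|k IHk lt_kn]; first by congr f; apply/rowP => j; rewrite mxE.
rewrite IHk ?(ltnW lt_kn) //; set jk := Ordinal lt_kn.
have spliceS j : j != jk -> splice k a b 0 j = splice k.+1 a b 0 j.
  move=> neq_j; rewrite !mxE ltnS [(j <= k)%N]leq_eqVlt.
  rewrite (_ : (j == k :> nat) = false) //.
  by apply: contraNF neq_j => /eqP jk_eq; apply/eqP/val_inj.
have [jkI | jkNI] := boolP (jk \in I).
  congr f; apply/rowP => j; case: (eqVneq j jk) => [->|/spliceS //].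
  by rewrite !mxE ltnn ltnSn abI.
exact: f_step (Zsplice k (ltnW lt_kn)) (Zsplice k.+1 lt_kn) jkNI spliceS.
Qed.

Hypotheses (oZ : open Z) (cZ : convex_subset Z).

Lemma convex_walk_eq z z' : Z z -> Z z' ->
  {in I, forall j, z 0 j = z' 0 j} -> f z = f z'.
Proof.
move=> Zz Zz' zz'I.
have [e e_gt0 boxZ] := convex_open_segment_box oZ cZ Zz Zz'.
(* [N] steps along the segment, each moving every coordinate by less than [e] *)
pose N := (Num.truncn ((\sum_j `|z 0 j - z' 0 j|) / e)).+1.
have N_gt0 : 0 < N%:R :> R by rewrite ltr0n.
pose t (k : nat) := k%:R / N%:R : R.
pose q k := (1 - t k) *: z + t k *: z'.
have t_01 k : (k <= N)%N -> 0 <= t k <= 1.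
  move=> le_kN; rewrite /t divr_ge0 ?ler0n ?(ltW N_gt0) //=.
  by rewrite ler_pdivrMr // mul1r ler_nat.
have qS_lt k j : `|q k 0 j - q k.+1 0 j| < e.
  have -> : q k 0 j - q k.+1 0 j = (z 0 j - z' 0 j) / N%:R.
    by rewrite !mxE /t -natr1; field; rewrite lt0r_neq0.
  rewrite normrM normfV (gtr0_norm N_gt0) ltr_pdivrMr // mulrC -ltr_pdivrMr //.
  apply: le_lt_trans (truncnS_gt _).
  rewrite ler_pM2r ?invr_gt0 // (bigD1 j) //= lerDl.
  by apply: sumr_ge0 => i _.
suff f_q k : (k <= N)%N -> f z = f (q k).
  rewrite (f_q N) //; congr f; apply/rowP => j.
  by rewrite !mxE /t divff ?lt0r_neq0 // subrr mul0r add0r mul1r.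
elim: k => [_|k IHk lt_kN].
  by congr f; apply/rowP => j; rewrite !mxE /t mul0r subr0 mul1r mul0r addr0.
rewrite IHk ?(ltnW lt_kN) //; apply: splice_walk_eq => [m _|j jI].
  apply: (boxZ (t k) (t_01 k (ltnW lt_kN))) => j; rewrite [splice _ _ _ 0 j]mxE.
  by case: ifP => _; [exact: qS_lt | rewrite subrr normr0].
by rewrite !mxE zz'I //; ring.
Qed.

End CoordinateWalk.

Arguments convex_walk_eq {R n T} I {Z f} f_step oZ cZ {z z'}.

Lemma minAIR_phi_inj {R : realType} {nA dx dZ : nat} {PA : {set {set 'I_nA}}}
    {X : set 'rV[R]_dx} {dY : {set 'I_nA} -> nat}
    {y : forall A, 'rV[R]_dx -> 'rV[R]_(dY A)} {Z : set 'rV[R]_dZ}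
    {psi : 'rV[R]_dx -> 'rV[R]_dZ} {I : {set 'I_nA} -> {set 'I_dZ}}
    {phi : forall A, 'rV[R]_#|I A| -> 'rV[R]_(dY A)} :
  is_minAIR PA X y Z psi I phi ->
  forall A, A \in PA -> set_inj (projset (I A) Z) (phi A).
Proof. by case=> _ _ _ phi_bij _ A /phi_bij[g [[]]]. Qed.

Section OverlapMap.

Context {R : realType} {nA dx : nat} {PA : {set {set 'I_nA}}}.
Context {X : set 'rV[R]_dx} {dY : {set 'I_nA} -> nat}.
Context {y : forall A, 'rV[R]_dx -> 'rV[R]_(dY A)}.
Context {dZ : nat} {Z : set 'rV[R]_dZ} {psiz : 'rV[R]_dx -> 'rV[R]_dZ}.
Context {Iz : {set 'I_nA} -> {set 'I_dZ}}.
Context {phiz : forall A, 'rV[R]_#|Iz A| -> 'rV[R]_(dY A)}.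
Context {dC : nat} {C : set 'rV[R]_dC} {psic : 'rV[R]_dx -> 'rV[R]_dC}.
Context {Ic : {set 'I_nA} -> {set 'I_dC}}.
Context {phic : forall A, 'rV[R]_#|Ic A| -> 'rV[R]_(dY A)}.

Hypotheses (minZ : is_minAIR PA X y Z psiz Iz phiz)
           (minC : is_minAIR PA X y C psic Ic phic) (cZ : convex_subset Z).

Let psiz_in x : X x -> Z (psiz x).
Proof. by case: minZ => -[psi_in _ _ _ _] _ _ _ _; apply: psi_in. Qed.
Let psiz_onto : Z `<=` psiz @` X. Proof. by case: minZ. Qed.
Let oZ : open Z. Proof. by case: minZ. Qed.
Let phizE A : A \in PA -> forall x, X x ->
  phiz A (Defs.proj (Iz A) (psiz x)) = y A x.
Proof. by case: minZ => -[_ _ _ _ phiE] _ _ _ _; apply: phiE. Qed.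
Let psic_in x : X x -> C (psic x).
Proof. by case: minC => -[psi_in _ _ _ _] _ _ _ _; apply: psi_in. Qed.
Let phicE A : A \in PA -> forall x, X x ->
  phic A (Defs.proj (Ic A) (psic x)) = y A x.
Proof. by case: minC => -[_ _ _ _ phiE] _ _ _ _; apply: phiE. Qed.

Lemma proj_psic_eq A x x' : A \in PA -> X x -> X x' ->
  Defs.proj (Iz A) (psiz x) = Defs.proj (Iz A) (psiz x') ->
  Defs.proj (Ic A) (psic x) = Defs.proj (Ic A) (psic x').
Proof.
move=> PA_A Xx Xx' eq_z; apply: (minAIR_phi_inj minC _ PA_A).
- by apply/mem_set; exists (psic x) => //; apply: psic_in.
- by apply/mem_set; exists (psic x') => //; apply: psic_in.
- by rewrite !phicE // -!phizE // eq_z.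
Qed.

Context {calA : {set {set 'I_nA}}}.
Hypotheses (calA_sub : calA \subset PA) (calA_neq0 : calA != finset.set0).

Local Notation IzA := (\bigcap_(A in calA) Iz A)%SET.
Local Notation IcA := (\bigcap_(A in calA) Ic A)%SET.

Lemma proj_overlap_psic_eq A x x' : A \in calA -> X x -> X x' ->
  Defs.proj (Iz A) (psiz x) = Defs.proj (Iz A) (psiz x') ->
  Defs.proj IcA (psic x) = Defs.proj IcA (psic x').
Proof.
move=> calA_A Xx Xx' /(proj_psic_eq _ _ _ _ Xx Xx') eq_c.
apply: proj_eq_subset (finset.bigcap_inf _ calA_A) _.
exact: eq_c (fintype.subsetP calA_sub _ calA_A).
Qed.

Lemma overlap_psic_eq x x' : X x -> X x' ->
  Defs.proj IzA (psiz x) = Defs.proj IzA (psiz x') ->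
  Defs.proj IcA (psic x) = Defs.proj IcA (psic x').
Proof.
pose fiber z := [set x | X x /\ psiz x = z].
pose preim z := xget 0 (fiber z).
have preimP z : Z z -> fiber z (preim z).
  by case/psiz_onto => x0 Xx0 <-; apply: (xgetI _ (x := x0)).
pose f z := Defs.proj IcA (psic (preim z)).
have [A0 calA_A0] := set0Pn _ calA_neq0.
have f_psiz x1 : X x1 -> f (psiz x1) = Defs.proj IcA (psic x1).
  move=> Xx1; have [Xpx psiz_px] := preimP _ (psiz_in _ Xx1).
  by apply: (proj_overlap_psic_eq _ _ _ calA_A0) => //; rewrite psiz_px.
move=> Xx Xx' /proj_eqP eq_IzA; rewrite -!f_psiz //.
apply: (convex_walk_eq IzA _ oZ cZ (psiz_in _ Xx) (psiz_in _ Xx') eq_IzA).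
move=> u v j Zu Zv jNIzA uv_off_j.
have [A calA_A jNA] : exists2 A, A \in calA & j \notin Iz A.
  apply: contrapT => noA; move/negP: jNIzA; apply; apply/bigcapP => A calA_A.
  by apply/negPn/negP => jNA; apply: noA; exists A.
have [[Xpu psiz_pu] [Xpv psiz_pv]] := (preimP _ Zu, preimP _ Zv).
apply: (proj_overlap_psic_eq _ _ _ calA_A) => //; rewrite psiz_pu psiz_pv.
by apply/proj_eqP => i iA; apply: uv_off_j; apply: contraNneq jNA => <-.
Qed.

Definition overlap_map (v : 'rV[R]_#|IzA|) : 'rV[R]_#|IcA| :=
  Defs.proj IcA (psic (xget 0 [set x | X x /\ Defs.proj IzA (psiz x) = v])).

Lemma overlap_mapE x : X x ->
  overlap_map (Defs.proj IzA (psiz x)) = Defs.proj IcA (psic x).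
Proof.
move=> Xx; rewrite /overlap_map.
set fiber := [set x' | X x' /\ _ = _].
have [Xx' eq_IzA] : fiber (xget 0 fiber) by apply: (xgetI _ (x := x)).
exact: overlap_psic_eq.
Qed.

Lemma subproj_overlap_map
    (phic_inv : forall A, 'rV[R]_(dY A) -> 'rV[R]_#|Ic A|) Aj w :
  {in projset (Ic Aj) C, cancel (phic Aj) (phic_inv Aj)} ->
  Aj \in calA -> projset (Iz Aj) Z w ->
  subproj (Ic Aj) IcA (phic_inv Aj (phiz Aj w))
    = overlap_map (subproj (Iz Aj) IzA w).
Proof.
move=> phic_invK calA_Aj [z /psiz_onto[x Xx <-] <-].
have PA_Aj := fintype.subsetP calA_sub _ calA_Aj.
rewrite !subproj_proj ?finset.bigcap_inf // overlap_mapE // phizE // -phicE //.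
rewrite phic_invK ?subproj_proj ?finset.bigcap_inf //.
by apply/mem_set; exists (psic x) => //; apply: psic_in.
Qed.

End OverlapMap.

Arguments overlap_map {R nA dx} X {dZ} psiz Iz {dC} psic Ic calA.

Theorem theorem1 (R : realType) (nA dx : nat)
  (PA : {set {set 'I_nA}}) (X : set 'rV[R]_dx)
  (dY : {set 'I_nA} -> nat) (y : forall A, 'rV[R]_dx -> 'rV[R]_(dY A))
  (dZ : nat) (Z : set 'rV[R]_dZ) (psiz : 'rV[R]_dx -> 'rV[R]_dZ)
  (Iz : {set 'I_nA} -> {set 'I_dZ})
  (phiz : forall A, 'rV[R]_#|Iz A| -> 'rV[R]_(dY A))
  (dC : nat) (C : set 'rV[R]_dC) (psic : 'rV[R]_dx -> 'rV[R]_dC)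
  (Ic : {set 'I_nA} -> {set 'I_dC})
  (phic : forall A, 'rV[R]_#|Ic A| -> 'rV[R]_(dY A))
  (phic_inv : forall A, 'rV[R]_(dY A) -> 'rV[R]_#|Ic A|)
  (calA : {set {set 'I_nA}}) :
  is_minAIR PA X y Z psiz Iz phiz ->
  is_minAIR PA X y C psic Ic phic ->
  convex_subset Z -> convex_subset C ->
  (* phic_inv A is the inverse of phic A : C_A -> Y_A *)
  (forall A, A \in PA -> {in projset (Ic A) C, cancel (phic A) (phic_inv A)}) ->
  calA \subset PA -> calA != finset.set0 ->
  let IzA := (\bigcap_(A in calA) Iz A)%SET in
  let IcA := (\bigcap_(A in calA) Ic A)%SET in
  exists G : 'rV[R]_#|IzA| -> 'rV[R]_#|IcA|,
    (forall Aj, Aj \in calA -> forall w, projset (Iz Aj) Z w ->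
       subproj (Ic Aj) IcA (phic_inv Aj (phiz Aj w))
         = G (subproj (Iz Aj) IzA w)) /\
    set_bij (projset IzA Z) (projset IcA C) G.
Proof.
move=> minZ minC cZ cC phic_invK calA_sub calA_neq0 IzA IcA.
have mapE := overlap_mapE minZ minC cZ calA_sub calA_neq0.
case: (minZ) => -[psiz_in _ _ _ _] psiz_onto _ _ _.
case: (minC) => -[psic_in _ _ _ _] psic_onto _ _ _.
exists (overlap_map X psiz Iz psic Ic calA); split.
  move=> Aj calA_Aj w Zw.
  apply: (subproj_overlap_map minZ minC cZ calA_sub calA_neq0) => //.
  exact/phic_invK/(fintype.subsetP calA_sub).
split.
- move=> _ [z /psiz_onto[x Xx <-] <-]; rewrite mapE //.
  by exists (psic x) => //; apply: psic_in.
- move=> v1 v2; rewrite !inE => -[z1 /psiz_onto[x1 Xx1 <-] <-].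
  move=> [z2 /psiz_onto[x2 Xx2 <-] <-].
  rewrite !mapE //.
  exact: (overlap_psic_eq minC minZ cC calA_sub calA_neq0).
- move=> _ [c /psic_onto[x Xx <-] <-]; rewrite -mapE //.
  exists (Defs.proj IzA (psiz x)) => //.
  by exists (psiz x) => //; apply: psiz_in.
Qed.
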